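(* Let $n\ge2$, let $A\in\mathbb{Z}^{m\times n}$ have full column rank, and let $b\in\mathbb{Z}^m$ be such that $P=\{x\in\mathbb{R}^n:Ax\le b\}$ is full-dimensional, $P\cap\mathbb{Z}^n=\emptyset$, and each row of $A$ defines a facet of $P$. Then there exists a row $a^\top$ of $A$ such that $w^{a}(P)\le\pi(A)-1$.
   Context: $w^{a}(P)=\max_{x\in P}a^\top x-\min_{y\in P}a^\top y$. The parameter $\pi(A)$ is defined as \[ \pi(A)=\max_{\substack{b'\in\mathbb{Z}^m:\\ P(A,b')\cap\mathbb{Z}^n\neq\emptyset}}\ \max_{x^*\text{ vertex of }P(A,b')}\ \min_{z^*\in P(A,b')\cap\mathbb{Z}^n}\|A(x^*-z^* )\|_\infty, \] where $P(A,b')=\{x\in\mathbb{R}^n:Ax\le b'\}$. *)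

From HB Require Import structures.
From mathcomp Require Import all_boot all_order all_algebra.
From mathcomp Require Import classical_sets reals.
Set Implicit Arguments. Unset Strict Implicit. Unset Printing Implicit Defensive.
Import Order.TTheory GRing.Theory Num.Theory.
Local Open Scope ring_scope.
Local Open Scope classical_set_scope.

Section Defs.
Variable R : realType.

Definition mxR (m n : nat) (A : 'M[int]_(m, n)) : 'M[R]_(m, n) :=
  map_mx (fun z : int => z%:~R) A.

Definition polyh (m n : nat) (A : 'M[int]_(m, n)) (b : 'cV[int]_m)
  : set 'cV[R]_n :=
  [set x | forall i : 'I_m, (mxR A *m x) i 0 <= (b i 0)%:~R].

Definition integral_pt (n : nat) (x : 'cV[R]_n) : Prop :=
  forall j : 'I_n, x j 0 \is a Num.int.

Definition norm_inf (m : nat) (v : 'cV[R]_m) : R :=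
  \big[Num.max/0]_(i < m) `|v i 0|.

Definition aff_indep_pts (n : nat) (S : set 'cV[R]_n) (k : nat) : Prop :=
  exists v : 'I_k.+1 -> 'cV[R]_n,
    (forall i, S (v i)) /\
    \rank (\matrix_(i < k) (v (lift ord0 i) - v ord0)^T) = k.

Definition dim_eq (n : nat) (S : set 'cV[R]_n) (d : nat) : Prop :=
  aff_indep_pts S d /\ ~ aff_indep_pts S d.+1.

Definition vertex (n : nat) (S : set 'cV[R]_n) (x : 'cV[R]_n) : Prop :=
  S x /\ forall (y z : 'cV[R]_n) (t : R), S y -> S z -> 0 < t -> t < 1 ->
    x = t *: y + (1 - t) *: z -> y = z.

Definition row_face (m n : nat) (A : 'M[int]_(m, n)) (b : 'cV[int]_m)
  (i : 'I_m) : set 'cV[R]_n :=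
  [set x | polyh A b x /\ (mxR A *m x) i 0 = (b i 0)%:~R].

(* w^a(P) <= c, with w^a(P) = max_{x in P} a x - min_{y in P} a y,
   written out for a nonempty P *)
Definition width_le (n : nat) (a : 'rV[R]_n) (S : set 'cV[R]_n) (c : R) : Prop :=
  forall x y, S x -> S y -> (a *m (x - y)) 0 0 <= c.

Definition prox_dist (m n : nat) (A : 'M[int]_(m, n)) (b' : 'cV[int]_m)
  (xs : 'cV[R]_n) : R :=
  inf [set q | exists z, polyh A b' z /\ integral_pt z /\
                         q = norm_inf (mxR A *m (xs - z))].

Definition pi_A (m n : nat) (A : 'M[int]_(m, n)) : R :=
  sup [set p | exists b' : 'cV[int]_m,
         (exists z, polyh A b' z /\ integral_pt z) /\
         exists xs, vertex (polyh A b') xs /\ p = prox_dist A b' xs].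

End Defs.

(* Let T be the set of rows of A that are implicit equalities of the recession cone
   {d | A d <= 0}.  Relaxing the rows of T by a large integer L creates an integer point:
   walk far along a direction of the cone that is strictly negative on the other rows and
   round down.  Adding the rows of T one at a time to the lattice-free P, we find S and
   i in T such that P(b + L 1_S) is lattice-free but P' = P(b + L 1_(S+i)) is not; then every
   integer point z of P' has a_i z >= b_i + 1.  As i is an implicit equality of the
   recession cone, every y in P lies above (in row i) some vertex x* of P', whose distance
   to the integer points of P' is at least b_i + 1 - a_i y.  Hence
   pi(A) >= b_i + 1 - a_i y >= a_i x - a_i y + 1 for all x, y in P.  That pi(A) is finite
   is the proximity theorem of Cook, Gerards, Schrijver and Tardos, proved here through
   integral conformal decompositions. *)

From mathcomp Require Import classical_sets boolp reals.
From mathcomp Require Import all_boot all_order all_algebra.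
From mathcomp Require Import ring lra.
Set Implicit Arguments. Unset Strict Implicit. Unset Printing Implicit Defensive.
Import Order.TTheory GRing.Theory Num.Theory.
Local Open Scope ring_scope.

Section Conform.
Variable R : realFieldType.
Implicit Types a b v u e t : R.

Definition conform a v := 0 <= a * v /\ (v = 0 -> a = 0).

Lemma conform0 v : conform 0 v.
Proof. by split; rewrite ?mul0r. Qed.

Lemma conform_refl v : conform v v.
Proof. by split; rewrite // -expr2 sqr_ge0. Qed.

Lemma conform_trans v a b : conform a v -> conform v b -> conform a b.
Proof.
move=> [av va] [vb bv]; split; last by move/bv/va.
have [v0|v0] := eqVneq v 0; first by rewrite (va v0) mul0r.
have vv : 0 < v * v by rewrite -expr2 exprn_even_gt0.
rewrite -(pmulr_lge0 _ vv).
have -> : a * b * (v * v) = (a * v) * (v * b) by ring.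
exact: mulr_ge0.
Qed.

Lemma conformD v a b : conform a v -> conform b v -> conform (a + b) v.
Proof.
move=> [av va] [bv vb]; split; first by rewrite mulrDl addr_ge0.
by move=> v0; rewrite (va v0) (vb v0) addr0.
Qed.

Lemma conformZ v c a : 0 <= c -> conform a v -> conform (c * a) v.
Proof.
move=> c0 [av va]; split; first by rewrite -mulrA mulr_ge0.
by move/va ->; rewrite mulr0.
Qed.

Lemma conform_ge0 v a : 0 <= v -> conform a v -> 0 <= a.
Proof.
move=> v_ge0 [av va]; have [v0|vn0] := eqVneq v 0; first by rewrite va.
by rewrite -(pmulr_lge0 _ (_ : 0 < v)) // lt_def vn0.
Qed.

(* [a] lies in the closed segment between [0] and [v]. *)
Definition between a v := conform a v /\ conform (v - a) v.

Lemma between0 v : between 0 v.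
Proof. by split; rewrite ?subr0; [apply: conform0 | apply: conform_refl]. Qed.

Lemma between_shift v e lam f a : conform e v -> conform (v - lam * e) v ->
  0 <= f <= lam -> between a (v - lam * e) -> between (a + f * e) v.
Proof.
move=> ev vev /andP[f_ge0 f_le] [a_conf va_conf]; split.
  by apply: conformD; [apply: conform_trans vev | apply: conformZ].
have -> : v - (a + f * e) = (v - lam * e - a) + (lam - f) * e by ring.
by apply: conformD; [apply: conform_trans vev | apply: conformZ; rewrite ?subr_ge0].
Qed.

Lemma between_addr_le z v a c : between a v -> z <= c -> z + v <= c -> z + a <= c.
Proof.
move=> [[av va] [vav _]] zc zvc.
by case: (ltgtP v 0) => [v_lt0|v_gt0|v0]; [nra | nra | rewrite (va v0) addr0].
Qed.

(* The minimum ratio test: step along [e] until the first coordinate of [u] that [e]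
   pushes towards 0 reaches it. *)
Lemma ratio_step (I : finType) (u e : I -> R) :
  (forall j, u j = 0 -> e j = 0) -> (exists j, e j * u j < 0) ->
  exists2 t, 0 < t & (forall j, conform (u j + t * e j) (u j)) /\
    (#|[set j | (u j + t * e j != 0)%R]| < #|[set j | (u j != 0)%R]|)%N.
Proof.
move=> ue [j0 j0_neg].
have : j0 \in [pred j | e j * u j < 0] by rewrite inE.
case/(arg_minP (fun j => - u j / e j)) => j1 j1P t_min.
have j1_neg : e j1 * u j1 < 0 := j1P.
have ej1 : e j1 != 0 by apply: contraTneq j1_neg => ->; rewrite mul0r ltxx.
have uj1 : u j1 != 0 by apply: contraTneq j1_neg => ->; rewrite mulr0 ltxx.
have t_gt0 : 0 < - u j1 / e j1.
  have -> : - u j1 / e j1 = - (e j1 * u j1) / e j1 ^+ 2 by field.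
  by rewrite divr_gt0 ?oppr_gt0 // exprn_even_gt0.
exists (- u j1 / e j1) => //; split; last first.
  rewrite (leq_ltn_trans _ (proper_card (properD1 (_ : j1 \in [set j | u j != 0])))) ?inE //.
  apply/subset_leq_card/subsetP => j; rewrite !inE; apply: contraTT.
  case/nandP => /negPn/eqP => [->|uj]; rewrite negbK; apply/eqP; first by field.
  by rewrite uj (ue _ uj) mulr0 addr0.
move=> j; split; last by move=> /[dup] /ue -> ->; rewrite mulr0 addr0.
rewrite mulrDl -expr2 -mulrA.
have [ej_neg|ej_ge0] := ltP (e j * u j) 0; last by rewrite addr_ge0 ?sqr_ge0 // mulr_ge0 // ltW.
have ej : e j != 0 by apply: contraTneq ej_neg => ->; rewrite mul0r ltxx.
have := ler_wnM2r (ltW ej_neg) (t_min j ej_neg).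
have -> : - u j / e j * (e j * u j) = - u j ^+ 2 by field.
lra.
Qed.

End Conform.

Section MatrixCoef.
Variables (R : realType) (p q : nat) (M : 'M[R]_(p, q)).
Implicit Types x y : 'cV[R]_q.

Lemma mulmx_colD x y i : (M *m (x + y)) i 0 = (M *m x) i 0 + (M *m y) i 0.
Proof. by rewrite mulmxDr mxE. Qed.

Lemma mulmx_colZ t x i : (M *m (t *: x)) i 0 = t * (M *m x) i 0.
Proof. by rewrite -scalemxAr mxE. Qed.

Lemma mulmx_colN x i : (M *m - x) i 0 = - (M *m x) i 0.
Proof. by rewrite mulmxN mxE. Qed.

Lemma mulmx_colB x y i : (M *m (x - y)) i 0 = (M *m x) i 0 - (M *m y) i 0.
Proof. by rewrite mulmx_colD mulmx_colN. Qed.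

Lemma mulmx_col0 i : (M *m (0 : 'cV[R]_q)) i 0 = 0.
Proof. by rewrite mulmx0 mxE. Qed.

Definition floor_cv (x : 'cV[R]_q) : 'cV[R]_q := \col_j (Num.floor (x j 0))%:~R.

Lemma floor_cv_integral x : integral_pt (floor_cv x).
Proof. by move=> j; rewrite mxE intr_int. Qed.

Lemma mulmx_floor_cv_le x i : (M *m floor_cv x) i 0 <= (M *m x) i 0 + \sum_j `|M i j|.
Proof.
rewrite -lerBlDl -mulmx_colB mxE; apply: ler_sum => j _.
rewrite !mxE; apply: le_trans (ler_norm _) _; rewrite normrM ler_piMr //.
have := floor_le (x j 0); have := floorD1_gt (x j 0); rewrite rmorphD /= => ? ?.
by rewrite ler0_norm ?subr_le0 //; lra.
Qed.

Hypothesis rkM : \rank M = q.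

Lemma full_rank_mulmx_eq0 x : M *m x = 0 -> x = 0.
Proof.
move=> Mx0; have rf : row_free M^T by rewrite /row_free mxrank_tr rkM.
apply: trmx_inj; apply: (row_free_inj rf).
by rewrite trmx0 mul0mx -trmx_mul Mx0 trmx0.
Qed.

Lemma full_rank_mulmx_neq0 x : x != 0 -> exists i, (M *m x) i 0 != 0.
Proof.
move=> x0; apply/existsP; apply: contraR x0 => /existsPn Mx0.
apply/eqP/full_rank_mulmx_eq0/matrixP => i k; rewrite ord1 [RHS]mxE.
by have := Mx0 i; rewrite negbK => /eqP.
Qed.

End MatrixCoef.

Section SupNorm.
Variables (R : realType) (k : nat).
Implicit Types v : 'cV[R]_k.

Lemma norm_inf_ge0 v : 0 <= norm_inf v.
Proof. by apply: (big_ind (fun x => 0 <= x)) => // x y; rewrite le_max => ->. Qed.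

Lemma norm_inf_ge v i : `|v i 0| <= norm_inf v.
Proof. by rewrite /norm_inf (bigD1 i) //= le_max lexx. Qed.

Lemma norm_inf_le v c : 0 <= c -> (forall i, `|v i 0| <= c) -> norm_inf v <= c.
Proof. by move=> c0 vc; apply: (big_ind (fun x => x <= c)) => // x y; rewrite ge_max => ->. Qed.

End SupNorm.

Section Vertices.
Variables (R : realType) (m n : nat) (M : 'M[R]_(m, n)) (c : 'I_m -> R).
Implicit Types x y d : 'cV[R]_n.

Definition polyhR : set 'cV[R]_n := [set x | forall i, (M *m x) i 0 <= c i].

Definition slack_rows x : {set 'I_m} := [set j | c j - (M *m x) j 0 != 0].

Lemma vertex_tight_kernel x : polyhR x ->
  (forall d, (forall j, (M *m x) j 0 = c j -> (M *m d) j 0 = 0) -> d = 0) ->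
  vertex polyhR x.
Proof.
move=> px tight0; split => // y z t py pz t_gt0 t_lt1 xE.
apply/eqP; rewrite -subr_eq0; apply/eqP/tight0 => j xj.
have slack_sum : t * (c j - (M *m y) j 0) + (1 - t) * (c j - (M *m z) j 0) = 0.
  by rewrite -xj xE mulmx_colD !mulmx_colZ; ring.
have sy : 0 <= t * (c j - (M *m y) j 0) by have := py j; nra.
have sz : 0 <= (1 - t) * (c j - (M *m z) j 0) by have := pz j; nra.
have /eqP : t * (c j - (M *m y) j 0) = 0 by lra.
have /eqP : (1 - t) * (c j - (M *m z) j 0) = 0 by lra.
rewrite !mulf_eq0 !subr_eq0 (gt_eqF t_gt0) (gt_eqF t_lt1) /=.
by rewrite mulmx_colB => /eqP <- /eqP <-; rewrite subrr.
Qed.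

Definition cone_eqs : {set 'I_m} :=
  [set i | `[< forall d, (forall j, (M *m d) j 0 <= 0) -> (M *m d) i 0 = 0 >]].

Lemma cone_eqs_interior : exists y, (forall k, (M *m y) k 0 <= 0) /\
  forall k, k \notin cone_eqs -> (M *m y) k 0 < 0.
Proof.
have /choice[f f_spec] : forall j, exists y, (forall k, (M *m y) k 0 <= 0) /\
    (j \notin cone_eqs -> (M *m y) j 0 < 0).
  move=> j; have [jT|] := boolP (j \in cone_eqs).
    by exists 0; split => [k|]; rewrite ?jT ?mulmx_col0.
  rewrite inE => /asboolPn/existsNP[d /not_implyP[d_le dj]].
  by exists d; split => // _; rewrite lt_neqAle d_le andbT; apply/eqP.
exists (\sum_j f j); have sumE k : (M *m \sum_j f j) k 0 = \sum_j (M *m f j) k 0.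
  by rewrite mulmx_sumr summxE.
split => k; rewrite sumE; first by rewrite sumr_le0 // => j _; case: (f_spec j).
move=> kT; rewrite (bigD1 k) //=; have [_ /(_ kT) fk] := f_spec k.
by rewrite ltr_wnDr // sumr_le0 // => j _; case: (f_spec j).
Qed.

Hypothesis rkM : \rank M = n.

Lemma cone_eqs_direction i0 d : i0 \in cone_eqs -> d != 0 ->
  exists2 d', d' = d \/ d' = - d &
    (M *m d') i0 0 <= 0 /\ exists j, 0 < (M *m d') j 0.
Proof.
rewrite inE => /asboolP i0_eq d0.
have signP j : (M *m d) j 0 != 0 ->
    exists2 d', d' = d \/ d' = - d & 0 < (M *m d') j 0.
  rewrite neq_lt => /orP[dj|dj]; last by exists d; [left|].
  by exists (- d); [right|rewrite mulmx_colN oppr_gt0].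
have [di0|di0] := eqVneq ((M *m d) i0 0) 0.
  have [j /signP[d' d'E dj]] := full_rank_mulmx_neq0 rkM d0.
  exists d' => //; split; last by exists j.
  by case: d'E => ->; rewrite ?mulmx_colN di0 ?oppr0.
have [d'' d''E di0'] := signP _ di0.
exists (- d''); first by case: d''E => ->; [right|left; rewrite opprK].
rewrite mulmx_colN oppr_le0 ltW //; split => //.
apply/not_existsP => no_pos; suff : (M *m - d'') i0 0 = 0.
  by rewrite mulmx_colN => /eqP; rewrite oppr_eq0 gt_eqF.
by apply: i0_eq => j; rewrite leNgt; apply/negP/no_pos.
Qed.

(* Take a point below [x] in row [i0] with fewest slack rows.  If it were not a vertex,
   a direction of its tight kernel that does not increase row [i0] leaves the polyhedron
   through a slack row (as [i0] is an implicit equality of the recession cone), and the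
   ratio test would make one more row tight. *)
Lemma cone_eqs_vertex_below i0 x : i0 \in cone_eqs -> polyhR x ->
  exists2 xs, vertex polyhR xs & (M *m xs) i0 0 <= (M *m x) i0 0.
Proof.
move=> i0_eq px.
pose below k := `[< exists2 y, polyhR y /\ (M *m y) i0 0 <= (M *m x) i0 0
                             & #|slack_rows y| = k >].
have : exists k, below k by exists #|slack_rows x|; apply/asboolP; exists x.
case/ex_minnP => k /asboolP[y [py y_below] k_def] y_min; subst k.
exists y => //; apply: vertex_tight_kernel => // d d_tight.
apply/eqP; apply: contraT => d0.
have [d' d'E [d'_i0 [j0 d'_j0]]] := cone_eqs_direction i0_eq d0.
have d'_tight j : (M *m y) j 0 = c j -> (M *m d') j 0 = 0.
  by move/d_tight; case: d'E => -> //; rewrite mulmx_colN => ->; rewrite oppr0.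
pose u j := c j - (M *m y) j 0.
have u_ge0 j : 0 <= u j by rewrite subr_ge0.
have d'_ker j : u j = 0 -> - (M *m d') j 0 = 0.
  by move/eqP; rewrite subr_eq0 => /eqP/esym/d'_tight ->; rewrite oppr0.
have d'_neg : exists j, - (M *m d') j 0 * u j < 0.
  exists j0; rewrite mulNr oppr_lt0 mulr_gt0 // lt_def u_ge0 andbT.
  by apply: contraTneq d'_j0 => /d'_ker/eqP; rewrite oppr_eq0 => /eqP ->; rewrite ltxx.
have [t t_gt0 [u_conf slack_lt]] := ratio_step d'_ker d'_neg.
have slack_y' : slack_rows (y + t *: d') = [set j | u j + t * - (M *m d') j 0 != 0].
  by apply/setP => j; rewrite !inE mulmx_colD mulmx_colZ /u opprD addrA mulrN.
suff /y_min : below #|slack_rows (y + t *: d')| by rewrite slack_y' leqNgt slack_lt.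
apply/asboolP; exists (y + t *: d') => //; split.
  by move=> j; have := conform_ge0 (u_ge0 j) (u_conf j); rewrite /u mulmx_colD mulmx_colZ; lra.
by rewrite mulmx_colD mulmx_colZ; nra.
Qed.

End Vertices.

Section Conformal.
Variables (R : realType) (m n : nat) (M : 'M[R]_(m, n)).
Hypothesis rkM : \rank M = n.
Implicit Types w y d : 'cV[R]_n.

Definition conformal w y := forall i, conform ((M *m w) i 0) ((M *m y) i 0).

Definition mx_support w : {set 'I_m} := [set i | (M *m w) i 0 != 0].

Lemma conformal_trans y w w' : conformal w' w -> conformal w y -> conformal w' y.
Proof. by move=> w'w wy i; apply: conform_trans (w'w i) (wy i). Qed.

(* A vector of minimal support among those conformal to [y]: a second direction in its
   tight kernel would, by the ratio test, give a conformal vector of smaller support. *)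
Lemma conformal_min_support y : y != 0 -> exists w, [/\ w != 0, conformal w y &
  forall d, (forall i, (M *m w) i 0 = 0 -> (M *m d) i 0 = 0) -> exists a, d = a *: w].
Proof.
move=> y0.
pose small k := `[< exists2 w, w != 0 /\ conformal w y & #|mx_support w| = k >].
have : exists k, small k.
  by exists #|mx_support y|; apply/asboolP; exists y => //; split => // i; apply: conform_refl.
case/ex_minnP => k /asboolP[w [w0 wy] k_def] w_min; subst k.
exists w; split => // d d_ker; apply: contrapT => not_par.
have [d' d'_ker [not_par' [j0 d'_j0]]] : exists2 d',
    (forall i, (M *m w) i 0 = 0 -> (M *m d') i 0 = 0) &
    (~ exists a, d' = a *: w) /\ exists j, (M *m d') j 0 * (M *m w) j 0 < 0.
  have d0 : d != 0 by apply/eqP => d0; apply: not_par; exists 0; rewrite d0 scale0r.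
  have [j dj] := full_rank_mulmx_neq0 rkM d0.
  have wj : (M *m w) j 0 != 0 by apply: contra_neq dj => /d_ker.
  have [sgn|sgn] := ltP ((M *m d) j 0 * (M *m w) j 0) 0.
    by exists d; [exact: d_ker | split => //; exists j].
  exists (- d); first by move=> i /d_ker; rewrite mulmx_colN => ->; rewrite oppr0.
  split; first by case=> a dE; apply: not_par; exists (- a); rewrite scaleNr -dE opprK.
  by exists j; rewrite mulmx_colN mulNr oppr_lt0 lt_def mulf_neq0.
have [t t_gt0 [w_conf supp_lt]] := ratio_step d'_ker (ex_intro _ j0 d'_j0).
have supp_w' : mx_support (w + t *: d') = [set i | (M *m w) i 0 + t * (M *m d') i 0 != 0].
  by apply/setP => i; rewrite !inE mulmx_colD mulmx_colZ.
suff /w_min : small #|mx_support (w + t *: d')| by rewrite supp_w' leqNgt supp_lt.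
apply/asboolP; exists (w + t *: d') => //; split; last first.
  by apply: conformal_trans wy => i; rewrite mulmx_colD mulmx_colZ.
apply/eqP => /eqP; rewrite addrC addr_eq0 => /eqP td'; apply: not_par'; exists (- t^-1).
by rewrite scaleNr -scalerN -td' scalerA mulVf ?gt_eqF ?scale1r.
Qed.

End Conformal.

Lemma rV_scale_int q (v : 'rV[rat]_q) :
  exists2 a : rat, a != 0 & forall j, a * v 0 j \is a Num.int.
Proof.
exists (\prod_(j < q) (denq (v 0 j))%:~R).
  by rewrite prodf_seq_neq0; apply/allP => j _; rewrite intr_eq0 denq_neq0.
move=> j; rewrite (bigD1 j) //= mulrAC [_ * v 0 j]mulrC -numqE.
by rewrite rpredM ?intr_int // rpred_prod // => i _; rewrite intr_int.
Qed.

Lemma int_kernel_vector (R : realType) p q (B : 'M[int]_(p, q)) (w : 'cV[R]_q) :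
  w != 0 -> mxR R B *m w = 0 ->
  exists g : 'cV[R]_q, [/\ integral_pt g, g != 0 & mxR R B *m g = 0].
Proof.
move=> w0 Bw0.
pose BQ : 'M[rat]_(p, q) := map_mx intr B.
have BQE : map_mx ratr BQ = mxR R B.
  by apply/matrixP => i j; rewrite !mxE ratr_int.
have : kermx BQ^T != 0.
  rewrite -mxrank_eq0 mxrank_ker mxrank_tr subn_eq0 -ltnNge ltn_neqAle rank_leq_col andbT.
  apply: contra_neq w0 => rkBQ; apply: (full_rank_mulmx_eq0 (M := mxR R B)) => //.
  by rewrite -BQE mxrank_map.
case/rowV0Pn => r /sub_kermxP rBQ r0.
have [a a0 ar_int] := rV_scale_int r.
exists (map_mx ratr (a *: r)^T); split.
- move=> j; rewrite !mxE; move: (ar_int j); rewrite intrEfloor => /eqP <-.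
  by rewrite ratr_int intr_int.
- by rewrite map_mx_eq0 trmx_eq0 scalemx_eq0 negb_or a0.
- rewrite -BQE -map_mxM -[BQ]trmxK -trmx_mul -scalemxAl rBQ scaler0.
  by rewrite trmx0 map_mx0.
Qed.

Section Proximity.
Variables (R : realType) (m n : nat) (A : 'M[int]_(m, n)).
Local Notation AR := (mxR R A).
Implicit Types x y : 'cV[R]_n.

Definition mask_rows (S : {set 'I_m}) : 'M[int]_(m, n) :=
  \matrix_(i, j) if i \in S then A i j else 0.

Lemma mask_rows_kerP S x :
  mxR R (mask_rows S) *m x = 0 <-> forall i, i \in S -> (AR *m x) i 0 = 0.
Proof.
have maskE i : (mxR R (mask_rows S) *m x) i 0 = if i \in S then (AR *m x) i 0 else 0.
  rewrite !mxE; case: ifP => iS; first by apply: eq_bigr => j _; rewrite !mxE iS.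
  by apply: big1 => j _; rewrite !mxE iS mul0r.
split => [Sx0 i iS | Sx0]; first by move: (maskE i); rewrite Sx0 iS mxE => /esym.
by apply/matrixP => i k; rewrite ord1 maskE [RHS]mxE; case: ifP => // /Sx0.
Qed.

(* An integral nonzero vector vanishing on the rows [S] ([0] if there is none).  Every
   support-minimal vector is proportional to one of them, so [elem_bound] bounds the
   integral elementary vectors of [A]. *)
Definition elem_vec S : 'cV[R]_n :=
  xget 0 (fun g => [/\ integral_pt g, g != 0 & mxR R (mask_rows S) *m g = 0]).

Definition elem_bound : R :=
  \big[Num.max/0]_(S : {set 'I_m}) norm_inf (AR *m elem_vec S).

Lemma elem_bound_ge S i : `|(AR *m elem_vec S) i 0| <= elem_bound.
Proof.
by apply: le_trans (norm_inf_ge _ i) _; rewrite /elem_bound (bigD1 S) //= le_max lexx.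
Qed.

Lemma elem_bound_ge0 : 0 <= elem_bound.
Proof.
by apply: (big_ind (fun r => 0 <= r)) => // [r s r0 _|S _]; rewrite ?le_max ?r0 ?norm_inf_ge0.
Qed.

Hypothesis rkA : \rank AR = n.

Lemma conformal_int_elem y : y != 0 -> exists g, [/\ integral_pt g, g != 0,
  conformal AR g y & forall i, `|(AR *m g) i 0| <= elem_bound].
Proof.
move=> y0; have [w [w0 wy w_min]] := conformal_min_support rkA y0.
pose Z := [set i | (AR *m w) i 0 == 0].
have /(xgetPex 0) : exists g, [/\ integral_pt g, g != 0 & mxR R (mask_rows Z) *m g = 0].
  by apply: (int_kernel_vector w0); apply/mask_rows_kerP => i; rewrite inE => /eqP.
rewrite -/(elem_vec Z) => -[gi g0 /mask_rows_kerP gZ].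
have [a gE] : exists a, elem_vec Z = a *: w.
  by apply: w_min => i wi; apply: gZ; rewrite inE wi.
have [a_lt0|a_gt0|a0] := ltgtP a 0; last by move: g0; rewrite gE a0 scale0r eqxx.
- exists (- elem_vec Z); split.
  + by move=> j; rewrite mxE rpredN.
  + by rewrite oppr_eq0.
  + move=> i; rewrite mulmx_colN gE mulmx_colZ -mulNr.
    by apply: conformZ (wy i); rewrite oppr_ge0 ltW.
  + by move=> i; rewrite mulmx_colN normrN elem_bound_ge.
- exists (elem_vec Z); split => // [i|i]; last exact: elem_bound_ge.
  by rewrite gE mulmx_colZ; apply: conformZ (wy i); rewrite ltW.
Qed.

(* Subtract [floor lam *: g] for an integral elementary vector [g] conformal to [y], with
   [lam] from the ratio test: the rest [y - lam *: g] has smaller support and the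
   fractional part [(lam - floor lam) *: g] costs at most [elem_bound] per row. *)
Lemma int_conformal_decomp k y : (#|mx_support AR y| <= k)%N -> exists h,
  [/\ integral_pt h, forall i, between ((AR *m h) i 0) ((AR *m y) i 0)
    & forall i, `|(AR *m (y - h)) i 0| <= k%:R * elem_bound].
Proof.
have decomp0 k' : exists h, [/\ integral_pt h,
    forall i, between ((AR *m h) i 0) ((AR *m 0) i 0)
    & forall i, `|(AR *m (0 - h)) i 0| <= k'%:R * elem_bound].
  exists 0; split => [j|i|i]; first by rewrite mxE rpred0.
    by rewrite mulmx_col0; apply: between0.
  by rewrite subr0 mulmx_col0 normr0 mulr_ge0 ?elem_bound_ge0.
elim: k y => [|k IH] y y_supp; have [->|y0] := eqVneq y 0; try exact: decomp0.
  have [i yi] := full_rank_mulmx_neq0 rkA y0.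
  by move: y_supp; rewrite leqn0 cards_eq0 => /eqP/setP/(_ i); rewrite !inE yi.
have [g [gi g0 gy g_bnd]] := conformal_int_elem y0.
have g_ker i : (AR *m y) i 0 = 0 -> - (AR *m g) i 0 = 0.
  by move/(gy i).2 ->; rewrite oppr0.
have g_neg : exists i, - (AR *m g) i 0 * (AR *m y) i 0 < 0.
  have [i gi0] := full_rank_mulmx_neq0 rkA g0; have [gyi gyi0] := gy i.
  by exists i; rewrite mulNr oppr_lt0 lt_def gyi andbT mulf_neq0 // (contra_neq gyi0 gi0).
have [lam lam_gt0 [y_conf supp_lt]] := ratio_step g_ker g_neg.
have y'E i : (AR *m (y - lam *: g)) i 0 = (AR *m y) i 0 + lam * - (AR *m g) i 0.
  by rewrite mulmx_colB mulmx_colZ mulrN.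
have supp' : (#|mx_support AR (y - lam *: g)| <= k)%N.
  have -> : mx_support AR (y - lam *: g) =
             [set i | (AR *m y) i 0 + lam * - (AR *m g) i 0 != 0].
    by apply/setP => i; rewrite !inE y'E.
  by rewrite -ltnS (leq_trans supp_lt).
have [h' [h'i h'_betw h'_bnd]] := IH _ supp'.
pose f : R := (Num.floor lam)%:~R.
have f_bnd : 0 <= f <= lam by rewrite ler0z floor_ge0 ltW //= floor_le.
have f_gap : lam - f <= 1 by have := floorD1_gt lam; rewrite rmorphD /=; lra.
exists (h' + f *: g); split.
- by move=> j; rewrite !mxE rpredD ?rpredM ?intr_int.
- move=> i; rewrite mulmx_colD mulmx_colZ; apply: (between_shift (gy i) _ f_bnd).
    by move: (y_conf i); rewrite mulrN.
  by move: (h'_betw i); rewrite y'E mulrN.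
- move=> i; have -> : (AR *m (y - (h' + f *: g))) i 0 =
      (AR *m (y - lam *: g - h')) i 0 + (lam - f) * (AR *m g) i 0.
    by rewrite !(mulmx_colB, mulmx_colD, mulmx_colN, mulmx_colZ); ring.
  rewrite [_.+1%:R]mulrSr [(_ + 1) * _]mulrDl mul1r.
  apply: le_trans (ler_normD _ _) (lerD (h'_bnd i) _).
  rewrite normrM ger0_norm ?subr_ge0 //; last by case/andP: f_bnd.
  by apply: le_trans (g_bnd i); rewrite ler_piMl.
Qed.

Lemma int_point_near (c : 'I_m -> R) x z0 :
  polyhR AR c x -> polyhR AR c z0 -> integral_pt z0 ->
  exists z, [/\ polyhR AR c z, integral_pt z
              & norm_inf (AR *m (x - z)) <= m%:R * elem_bound].
Proof.
move=> px pz0 z0i.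
have supp_m : (#|mx_support AR (x - z0)| <= m)%N.
  by rewrite -[m in (_ <= m)%N]card_ord max_card.
have [h [hi h_betw h_bnd]] := int_conformal_decomp supp_m.
exists (z0 + h); split.
- move=> i; rewrite mulmx_colD; apply: between_addr_le (h_betw i) (pz0 i) _.
  by rewrite mulmx_colB addrC subrK.
- by move=> j; rewrite mxE rpredD.
- apply: norm_inf_le => [|i]; first by rewrite mulr_ge0 ?elem_bound_ge0.
  by rewrite opprD addrA.
Qed.

Lemma prox_dist_le_pi (b' : 'cV[int]_m) xs :
  (exists z, polyh (R:=R) A b' z /\ integral_pt z) -> vertex (polyh A b') xs ->
  prox_dist A b' xs <= pi_A R A.
Proof.
move=> b'_int xs_vert; apply: ub_le_sup; last by exists b'; split => //; exists xs.
exists (m%:R * elem_bound) => _ [b'' [[z0 [pz0 z0i]] [x [[px _] ->]]]].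
have [z [pz zi xz]] := int_point_near px pz0 z0i.
apply: le_trans xz; apply: ge_inf; last by exists z.
by exists 0 => _ [z' [_ [_ ->]]]; apply: norm_inf_ge0.
Qed.

End Proximity.

Lemma exists_setU1_flip (T : finType) (P : {set T} -> Prop) (X : {set T}) :
  P set0 -> ~ P X -> exists S, exists2 i, i \in X & P S /\ ~ P (i |: S).
Proof.
suff flip (s : seq T) S0 : P S0 -> ~ P (S0 :|: [set x in s]) ->
    exists S, exists2 i, i \in s & P S /\ ~ P (i |: S).
  move=> P0 nPX; have [|S [i]] := flip (enum X) set0 P0.
    by rewrite set0U (_ : [set x in enum X] = X) // ; apply/setP => x; rewrite inE mem_enum.
  by rewrite mem_enum; exists S, i.
elim: s S0 => [|i s IH] S0 PS0 nPs.
  by rewrite (_ : _ :|: _ = S0) in nPs; last by apply/setP => x; rewrite !inE orbF.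
have [PSi|] := pselect (P (i |: S0)); last by exists S0, i; rewrite ?mem_head.
have [|S [j js PS]] := IH _ PSi.
  rewrite (_ : _ :|: _ = S0 :|: [set x in i :: s]) // -setUA.
  by apply/setP => x; rewrite !inE orbCA.
by exists S; exists j; rewrite // inE js orbT.
Qed.

Section LatticeFree.
Variables (R : realType) (m n : nat) (A : 'M[int]_(m, n)).
Local Notation AR := (mxR R A).
Implicit Types (b : 'cV[int]_m) (x z : 'cV[R]_n).

Definition relax b (L : int) (S : {set 'I_m}) : 'cV[int]_m := \col_i (b i 0 + L *+ (i \in S)).

Lemma relax_set0 b L : relax b L set0 = b.
Proof. by apply/matrixP => k l; rewrite ord1 mxE inE mulr0n addr0. Qed.

Lemma relaxE b L S i :
  ((relax b L S) i 0)%:~R = (b i 0)%:~R + (if i \in S then L%:~R else 0) :> R.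
Proof. by rewrite mxE rmorphD rmorphMn; case: (i \in S). Qed.

Lemma polyh_relax b L S x : 0 <= L -> polyh A b x -> polyh A (relax b L S) x.
Proof.
move=> L_ge0 px i; rewrite relaxE; have := px i.
by case: ifP => _; rewrite ?addr0 // -(ler0z R) in L_ge0; lra.
Qed.

(* Go far along a direction of the recession cone that is strictly negative off
   [cone_eqs] and round down: the rounding error [err k] of row [k] is absorbed by the
   distance travelled outside [cone_eqs] and by [L] on [cone_eqs]. *)
Lemma relax_cone_eqs_int_point b x0 : polyh A b x0 ->
  exists2 L : int, 0 <= L & exists z, polyh A (relax b L (cone_eqs AR)) z /\ integral_pt z.
Proof.
move=> px0; have [y [y_le y_lt]] := cone_eqs_interior AR.
pose err k := \sum_j `|AR k j|.
have err_ge0 k : 0 <= err k by rewrite sumr_ge0.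
pose t := \sum_(k | k \notin cone_eqs AR) err k / - (AR *m y) k 0.
have t_ge k : k \notin cone_eqs AR -> err k <= t * - (AR *m y) k 0.
  move=> kT; have yk : 0 < - (AR *m y) k 0 by rewrite oppr_gt0 y_lt.
  rewrite -ler_pdivrMr // /t (bigD1 k) //= lerDl sumr_ge0 // => j /andP[jT _].
  by rewrite divr_ge0 // oppr_ge0 ltW // y_lt.
pose L := Num.ceil (\sum_k err k).
have err_L k : err k <= L%:~R.
  by apply: le_trans (ceil_ge _); rewrite (bigD1 k) //= lerDl sumr_ge0.
exists L; first by rewrite -(ler0z R) (le_trans _ (ceil_ge _)) ?sumr_ge0.
exists (floor_cv (x0 + t *: y)); split; last exact: floor_cv_integral.
move=> k; rewrite relaxE; have := mulmx_floor_cv_le AR (x0 + t *: y) k.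
rewrite mulmx_colD mulmx_colZ -/(err k); have := px0 k; have := err_L k.
case: ifP => [|/negbT/t_ge]; last lra.
by rewrite inE => /asboolP/(_ y y_le) ->; lra.
Qed.

Lemma int_points_above b L S i : 0 <= L ->
  (forall x, polyh A (relax b L S) x -> ~ integral_pt x) ->
  forall z, polyh A (relax b L (i |: S)) z -> integral_pt z ->
  (b i 0)%:~R + 1 <= (AR *m z) i 0.
Proof.
move=> L_ge0 freeS z pz zi; rewrite leNgt; apply/negP => z_low; apply: (freeS z) => // k.
have [->|ki] := eqVneq k i; last by move: (pz k); rewrite !relaxE !inE (negbTE ki).
have /intrP[a az] : (AR *m z) i 0 \is a Num.int.
  by rewrite mxE rpred_sum // => j _; rewrite mxE rpredM ?intr_int.
have a_le : (a <= b i 0)%R by rewrite -ltzD1 -(ltr_int R) rmorphD /= -az.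
rewrite relaxE az; apply: le_trans (_ : (b i 0)%:~R <= _); first by rewrite ler_int.
by case: ifP => _; rewrite ?addr0 // lerDl ler0z.
Qed.

Lemma prox_dist_ge_row (b' : 'cV[int]_m) xs i (beta : R) :
  (exists z, polyh A b' z /\ integral_pt z) ->
  (forall z, polyh A b' z -> integral_pt z -> beta <= (AR *m z) i 0) ->
  beta - (AR *m xs) i 0 <= prox_dist A b' xs.
Proof.
move=> [z0 [pz0 z0i]] above.
apply: lb_le_inf; first by exists (norm_inf (AR *m (xs - z0))), z0.
move=> _ [z [pz [zi ->]]]; apply: le_trans (norm_inf_ge _ i).
rewrite mulmx_colB -normrN opprB; have := above z pz zi.
by have := ler_norm ((AR *m z) i 0 - (AR *m xs) i 0); lra.
Qed.

End LatticeFree.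

Unset Implicit Arguments.

Theorem lemma9 (R : realType) (m n : nat) (A : 'M[int]_(m, n))
  (b : 'cV[int]_m) :
  (2 <= n)%N ->
  \rank (mxR R A) = n ->
  dim_eq (polyh (R:=R) A b) n ->
  (forall x, polyh (R:=R) A b x -> ~ integral_pt x) ->
  (forall i : 'I_m, dim_eq (row_face (R:=R) A b i) n.-1) ->
  exists i : 'I_m,
    width_le (row i (mxR R A)) (polyh (R:=R) A b) (pi_A R A - 1).
Proof.
move=> _ rkA [[v [v_in _]] _] lattice_free _.
have [L L_ge0 [z [pz zi]]] := relax_cone_eqs_int_point (v_in ord0).
pose free S := forall x, polyh (R:=R) A (relax b L S) x -> ~ integral_pt x.
have [S [i iT [freeS not_freeSi]]] :
    exists S, exists2 i, i \in cone_eqs (mxR R A) & free S /\ ~ free (i |: S).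
  by apply: exists_setU1_flip => [|/(_ z pz)//]; rewrite /free relax_set0.
exists i => x y px py; rewrite -row_mul mxE mulmx_colB.
set b' := relax b L (i |: S).
have b'_int : exists z, polyh (R:=R) A b' z /\ integral_pt z.
  by apply: contrapT => no_int; apply: not_freeSi => z' pz' z'i; apply: no_int; exists z'.
have [xs xs_vert xs_le] := cone_eqs_vertex_below rkA iT (polyh_relax (i |: S) L_ge0 py).
have := prox_dist_ge_row xs b'_int (int_points_above L_ge0 freeS).
have := prox_dist_le_pi rkA b'_int xs_vert; have := px i; lra.
Qed.
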